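(* Fix an integer $m\ge 1$, let $\xi=(\xi_1\ge\cdots\ge\xi_\ell>0)$ be a partition with $\xi_i\le m$ for all $i$, and let $\mu\in\mathbb Z_{\ge 0}$. Write $\mu=\mu_1 m+\mu_0$ with $0\le\mu_0<m$, and consider the formal power series \[ F(x)=F_{\xi,m,\mu}(x)=\frac{p_{m-\mu_0-1}(x)\,p_\xi(x)}{p_m(x)^{\mu_1+1}}=\sum_{r\ge 0}a_r x^r . \] Let $t:=\#\{i:\xi_i=m\}$. Then: (1) If $m=1$, then $F_{\xi,1,\mu}(x)=1$. (2) Assume $m\ge 2$. (a) If $t\ge \mu_1+1$, then $F_{\xi,m,\mu}(x)$ is a polynomial; in particular $a_r=0$ for all sufficiently large $r$. (b) If $t\le \mu_1$, then $a_r>0$ for all sufficiently large $r$.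
   Context: The polynomials $p_r(x)\in\mathbb Z[x]$ are defined by $p_0(x)=p_1(x)=1$ and $p_{r+1}(x)=p_r(x)-x\,p_{r-1}(x)$ for $r\ge 1$. For a partition $\xi=(\xi_1,\dots,\xi_\ell)$, $p_\xi(x):=\prod_{i=1}^\ell p_{\xi_i}(x)$. Since $p_m(0)=1$, the quotient is a well-defined formal power series in $x$. *)

From mathcomp Require Import all_boot all_order all_algebra.
Set Implicit Arguments. Unset Strict Implicit. Unset Printing Implicit Defensive.
Import GRing.Theory Num.Theory.
Local Open Scope ring_scope.

(* p_0 = p_1 = 1, p_{r+1} = p_r - x p_{r-1}; pp r = (p_r, p_{r+1}) *)
Fixpoint pp (r : nat) : {poly int} * {poly int} :=
  match r with
  | 0%N => (1, 1)
  | r'.+1 => let: (a, b) := pp r' in (b, b - 'X * a)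
  end.

Definition p (r : nat) : {poly int} := (pp r).1.

Definition p_part (xi : seq nat) : {poly int} := \prod_(k <- xi) p k.

(* r-th coefficient of the formal power series num/den, valid when den`_0 = 1:
   1/den = sum_{j>=0} (1 - den)^j, and (1-den)^j has no terms of degree < j,
   so only j <= r contribute to the r-th coefficient. *)
Definition fps_div_coef (num den : {poly int}) (r : nat) : int :=
  (num * \sum_(j < r.+1) (1 - den) ^+ j)`_r.

Definition F_coef (xi : seq nat) (m mu : nat) (r : nat) : int :=
  fps_div_coef (p (m - (mu %% m) - 1) * p_part xi) (p m ^+ (mu %/ m).+1) r.

From Pilot Require Import Defs.
From mathcomp Require Import all_boot all_order all_algebra.
From mathcomp Require Import Rstruct all_classical all_reals.
From mathcomp Require Import topology normedtype sequences trigo.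
From mathcomp Require Import zify ring lra.
Import Order.TTheory GRing.Theory Num.Theory numFieldNormedType.Exports.
Set Implicit Arguments. Unset Strict Implicit. Unset Printing Implicit Defensive.
Local Open Scope ring_scope.

(* With gam_k := 4 cos^2 (k pi / (m + 1)), the identity
   p_n(1 / (4 cos^2 t)) (2 cos t)^n sin t = sin ((n + 1) t) shows that the 1 / gam_k,
   0 < k <= m/2, are the roots of p_m, hence p_m = prod_k (1 - gam_k x), and that every
   p_j with j < m is positive at 1 / gam_1.  With t parts of xi equal to m and
   Q := p_(m - mu0 - 1) * prod_(xi_i < m) p_(xi_i), we get F = Q * p_m^(t - mu1 - 1): a
   polynomial when t > mu1.  Otherwise, gam_1 being the largest gam_k, the coefficients of
   1 / p_m^(mu1 + 1 - t) are gam_1^n G(n) with G >= 1 and G(n+1) / G(n) -> 1, so the n-th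
   coefficient of F is gam_1^n G(n) (Q(1 / gam_1) + o(1)), which is eventually positive. *)

Lemma pSS n : p n.+2 = p n.+1 - 'X * p n.
Proof. by rewrite /p /=; case: (pp n). Qed.

Lemma p_coef0 n : (p n)`_0 = 1.
Proof.
suff: (p n)`_0 = 1 /\ (p n.+1)`_0 = 1 by case.
elim: n => [|n [_ IH]]; first by rewrite coefC.
by split=> //; rewrite pSS coefB coefXM /= IH subr0.
Qed.

Lemma size_p n : (size (p n) <= n./2.+1)%N.
Proof.
suff: (size (p n) <= n./2.+1)%N /\ (size (p n.+1) <= n.+1./2.+1)%N by case.
elim: n => [|n [IH1 IH2]]; first by rewrite size_poly1.
split=> //; rewrite pSS (leq_trans (size_polyD _ _)) // geq_max size_polyN.
rewrite (leq_trans IH2) ?ltnS ?half_leq //=.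
by rewrite (leq_trans (size_polyMleq _ _)) // size_polyX.
Qed.

Lemma p_part_count (xi : seq nat) (m : nat) :
  Defs.p_part xi = p m ^+ count_mem m xi * Defs.p_part [seq k <- xi | k != m].
Proof.
rewrite /Defs.p_part; elim: xi => [|k xi IH]; first by rewrite !big_nil mulr1.
rewrite /= big_cons IH; case: eqP => [->|km] /=; first by rewrite exprS mulrA.
by rewrite big_cons mulrCA.
Qed.

Section Convolution.
Variable R : nzRingType.

Definition conv (P : {poly R}) (f : nat -> R) (n : nat) : R :=
  \sum_(i < n.+1) P`_i * f (n - i)%N.

Definition delta (n : nat) : R := (n == 0)%:R.

Lemma conv_coef (P Q : {poly R}) n : conv P (fun k => Q`_k) n = (P * Q)`_n.
Proof. by rewrite /conv coefM. Qed.

Lemma eq_conv (P : {poly R}) f g : f =1 g -> conv P f =1 conv P g.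
Proof. by move=> fg n; apply: eq_bigr => i _; rewrite fg. Qed.

Lemma conv_poly (P : {poly R}) f k n : (k <= n)%N ->
  conv P f k = (P * \poly_(i < n.+1) f i)`_k.
Proof.
move=> kn; rewrite coefM; apply: eq_bigr => i _.
by rewrite coef_poly ltnS (leq_trans (leq_subr _ _) kn).
Qed.

Lemma conv_mul (P Q : {poly R}) f n : conv (P * Q) f n = conv P (conv Q f) n.
Proof.
rewrite !(conv_poly _ _ (leqnn n)) -mulrA !coefM; apply: eq_bigr => i _.
by rewrite coef_poly ltnS leq_subr (conv_poly _ _ (leq_subr i n)).
Qed.

Lemma conv_delta (P : {poly R}) n : conv P delta n = P`_n.
Proof.
rewrite /conv big_ord_recr /= subnn mulr1 big1 ?add0r // => i _.
by rewrite /delta subn_eq0 leqNgt ltn_ord mulr0.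
Qed.

Lemma conv_inj (P : {poly R}) f g : P`_0 = 1 ->
  conv P f =1 conv P g -> f =1 g.
Proof.
move=> P0 fg n; elim/ltn_ind: n => n IH; have := fg n.
rewrite /conv !big_ord_recl P0 !mul1r !subn0.
rewrite (eq_bigr (fun i : 'I_n => P`_(lift ord0 i) * g (n - lift ord0 i)%N)).
  exact: addIr.
by move=> i _; rewrite IH // lift0 /=; have := ltn_ord i; lia.
Qed.

End Convolution.

Arguments delta {R}.

Lemma conv_inverse (R : comNzRingType) (D Q : {poly R}) g n :
  conv D g =1 delta -> conv D (conv Q g) n = Q`_n.
Proof. by move=> Dg; rewrite -conv_mul mulrC conv_mul (eq_conv _ Dg) conv_delta. Qed.

Lemma conv_linear0 (R : comNzRingType) (g : R) h : conv (1 - g%:P * 'X) h 0 = h 0.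
Proof. by rewrite /conv big_ord1 coefB coefC coefCM coefX mulr0 subr0 mul1r. Qed.

Lemma conv_linearS (R : comNzRingType) (g : R) h n :
  conv (1 - g%:P * 'X) h n.+1 = h n.+1 - g * h n.
Proof.
rewrite /conv !big_ord_recl big1 => [|i _]; last first.
  by rewrite coefB coefC coefCM coefX mulr0 subrr mul0r.
rewrite !coefB !coefC !coefCM !coefX /= mulr0 mulr1 subr0 sub0r mul1r.
by rewrite subn0 subSS subn0 addr0 mulNr.
Qed.

Lemma conv_map (R : nzRingType) (P : {poly int}) (f : nat -> int) n :
  conv (map_poly intr P) (fun k => (f k)%:~R : R) n = (conv P f n)%:~R.
Proof. by rewrite /conv rmorph_sum; apply: eq_bigr => i _; rewrite coef_map rmorphM. Qed.

Lemma coefM_exp_lt (R : nzRingType) (q a : {poly R}) j k :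
  a`_0 = 0 -> (k < j)%N -> (q * a ^+ j)`_k = 0.
Proof.
move=> a0; elim: j k => [//|j IH] k kj.
rewrite exprSr mulrA coefM big1 // => l _.
have [lk|kl] := ltnP l k; first by rewrite IH ?mul0r //; lia.
by have := ltn_ord l; rewrite (_ : k - l = 0)%N ?a0 ?mulr0 //; lia.
Qed.

Lemma coef0_exp (R : comNzRingType) (P : {poly R}) e : P`_0 = 1 -> (P ^+ e)`_0 = 1.
Proof. by move=> P0; rewrite -horner_coef0 horner_exp horner_coef0 P0 expr1n. Qed.

Section PowerSeriesDivision.
Variables num den : {poly int}.
Hypothesis den0 : den`_0 = 1.

Let den_sub0 : (1 - den)`_0 = 0.
Proof. by rewrite coefB coefC den0 subrr. Qed.

Lemma fps_div_coefE k r : (k <= r)%N ->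
  fps_div_coef num den k = (num * \sum_(j < r.+1) (1 - den) ^+ j)`_k.
Proof.
move=> kr; rewrite /fps_div_coef -(subnKC kr).
elim: (r - k)%N => [|d IH]; first by rewrite addn0.
rewrite IH addnS [in RHS]big_ord_recr /= mulrDr coefD.
by rewrite (coefM_exp_lt _ den_sub0) ?addr0 // ltnS leq_addr.
Qed.

(* den * sum_(j <= r) (1 - den)^j = 1 - (1 - den)^(r+1) is 1 up to degree r *)
Lemma conv_fps_div_coef r : conv den (fps_div_coef num den) r = num`_r.
Proof.
rewrite /conv (eq_bigr (fun i : 'I_r.+1 =>
  den`_i * (num * \sum_(j < r.+1) (1 - den) ^+ j)`_(r - i))); last first.
  by move=> i _; rewrite (fps_div_coefE (leq_subr i r)).
rewrite -coefM mulrCA -{1}(subKr 1 den) -opprB mulNr -subrX1 opprB.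
by rewrite mulrBr mulr1 coefB coefM_exp_lt ?subr0.
Qed.

Lemma fps_div_coef_mul Q : num = den * Q -> fps_div_coef num den =1 (fun r => Q`_r).
Proof.
move=> numE; apply: (conv_inj den0) => r.
by rewrite conv_fps_div_coef conv_coef numE.
Qed.

Lemma fps_div_coef_map (R : nzRingType) (f : nat -> R) :
  (forall n, conv (map_poly intr den) f n = (map_poly intr num)`_n) ->
  forall r, (fps_div_coef num den r)%:~R = f r.
Proof.
move=> numE; apply: (@conv_inj _ (map_poly intr den)) => [|n].
  by rewrite coef_map den0.
by rewrite conv_map conv_fps_div_coef numE coef_map.
Qed.

End PowerSeriesDivision.

Section ChebyshevRoots.
Variable R : realType.

Definition Pr n : {poly R} := map_poly intr (p n).

Lemma PrSS n : Pr n.+2 = Pr n.+1 - 'X * Pr n.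
Proof. by rewrite /Pr pSS rmorphB rmorphM /= map_polyX. Qed.

Lemma Pr0 : Pr 0 = 1. Proof. exact: rmorph1. Qed.
Lemma Pr1 : Pr 1 = 1. Proof. exact: rmorph1. Qed.

Lemma horner_Pr_cos (t : R) n : cos t != 0 ->
  (Pr n).[(4 * cos t ^+ 2)^-1] * (2 * cos t) ^+ n * sin t = sin (n.+1%:R * t).
Proof.
move=> c0; set x := (4 * cos t ^+ 2)^-1.
have xc : x * (2 * cos t) ^+ 2 = 1.
  by rewrite /x exprMn -natrX mulVf // mulf_neq0 ?pnatr_eq0 // expf_neq0.
suff: (Pr n).[x] * (2 * cos t) ^+ n * sin t = sin (n.+1%:R * t) /\
      (Pr n.+1).[x] * (2 * cos t) ^+ n.+1 * sin t = sin (n.+2%:R * t) by case.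
elim: n => [|n [IH1 IH2]].
  rewrite Pr0 Pr1 hornerC !mul1r expr1 mulr2n; split=> //.
  by rewrite [(1 + 1) * t]mulrDl mul1r sinD; ring.
split=> //; rewrite PrSS (mulrC 'X) hornerD hornerN hornerMX.
set a := (Pr n.+1).[x]; set b := (Pr n).[x]; set c2 := 2 * cos t.
have -> : (a - b * x) * c2 ^+ n.+2 * sin t =
    c2 * (a * c2 ^+ n.+1 * sin t) - (x * c2 ^+ 2) * (b * c2 ^+ n * sin t).
  by rewrite !exprS; ring.
rewrite xc mul1r IH1 IH2.
have -> : n.+3%:R * t = n.+2%:R * t + t by rewrite -[n.+3]addn1 natrD mulrDl mul1r.
have -> : n.+1%:R * t = n.+2%:R * t - t by rewrite -[n.+2]addn1 natrD mulrDl mul1r addrK.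
rewrite sinB sinD /c2; ring.
Qed.

Lemma sin_nat_pi k : sin (k%:R * pi) = 0 :> R.
Proof.
elim: k => [|k IH]; first by rewrite mul0r sin0.
by rewrite -addn1 natrD mulrDl mul1r sinDpi IH oppr0.
Qed.

Variable m : nat.

Definition theta k : R := k%:R * pi / m.+1%:R.
Definition gam k : R := 4 * cos (theta k) ^+ 2.

Section SmallIndex.
Variable k : nat.
Hypotheses (k_gt0 : (0 < k)%N) (k_le : (k.*2 <= m)%N).

Lemma theta_gt0 : 0 < theta k.
Proof. by rewrite /theta divr_gt0 ?mulr_gt0 ?ltr0n ?pi_gt0. Qed.

Lemma theta_lt_pihalf : theta k < pi / 2.
Proof.
have pi0 : 0 < pi :> R := pi_gt0 R.
rewrite /theta ltr_pdivrMr ?ltr0n //.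
have : (k.*2 + 1)%:R <= m.+1%:R :> R by rewrite ler_nat addn1.
rewrite natrD -muln2 natrM; nra.
Qed.

Lemma theta_in_itv : theta k \in `[0, pi].
Proof.
have := theta_lt_pihalf; have := pi_gt0 R.
by rewrite in_itv /= (ltW theta_gt0); lra.
Qed.

Lemma cos_theta_gt0 : 0 < cos (theta k).
Proof.
apply: cos_gt0_pihalf; have := theta_lt_pihalf; have := theta_gt0.
have := pi_gt0 R; lra.
Qed.

Lemma sin_theta_gt0 : 0 < sin (theta k).
Proof. by apply: sin_gt0_pihalf; rewrite theta_gt0 theta_lt_pihalf. Qed.

Lemma gam_gt0 : 0 < gam k.
Proof. by rewrite mulr_gt0 ?ltr0n // exprn_gt0 // cos_theta_gt0. Qed.

Lemma Pr_root_gam : (Pr m).[(gam k)^-1] = 0.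
Proof.
have := horner_Pr_cos m (lt0r_neq0 cos_theta_gt0).
rewrite (_ : m.+1%:R * theta k = k%:R * pi); last first.
  by rewrite /theta mulrC divfK ?pnatr_eq0.
rewrite sin_nat_pi => /eqP; rewrite !mulf_eq0 (gt_eqF sin_theta_gt0) expf_eq0.
by rewrite mulf_eq0 (gt_eqF cos_theta_gt0) pnatr_eq0 andbF !orbF => /eqP.
Qed.

End SmallIndex.

Lemma gam_le1 k : (0 < k)%N -> (k.*2 <= m)%N -> gam k <= gam 1.
Proof.
move=> k0 km; have m2 : (1.*2 <= m)%N by lia.
rewrite /gam ler_pM2l ?ltr0n // (ler_pXn2r (isT : (0 < 2)%N)) ?nnegrE;
  try by rewrite ltW ?cos_theta_gt0.
rewrite leNgt ltr_cos ?theta_in_itv // -leNgt /theta.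
by rewrite ler_pM2r ?invr_gt0 ?ltr0n // ler_pM2r ?pi_gt0 // ler_nat.
Qed.

Lemma gam_inj i j : (0 < i)%N -> (i.*2 <= m)%N -> (0 < j)%N -> (j.*2 <= m)%N ->
  gam i = gam j -> i = j.
Proof.
have four_neq0 : (4 : R) != 0 by rewrite pnatr_eq0.
move=> i0 im j0 jm /(mulfI four_neq0) /eqP.
rewrite eqrXn2 ?ltW ?cos_theta_gt0 // => /eqP /cos_inj.
move=> /(_ (theta_in_itv i0 im) (theta_in_itv j0 jm)) /mulIf.
rewrite invr_eq0 pnatr_eq0 => /(_ isT) /(mulIf (lt0r_neq0 (pi_gt0 R))) /eqP.
by rewrite eqr_nat => /eqP.
Qed.

Lemma Pr_gt0 j : (2 <= m)%N -> (j < m)%N -> 0 < (Pr j).[(gam 1)^-1].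
Proof.
move=> m2 jm; have m1 : (1.*2 <= m)%N by lia.
have c0 := cos_theta_gt0 (ltn0Sn 0) m1.
have : 0 < sin (j.+1%:R * theta 1).
  apply: sin_gt0_pi; rewrite /theta mul1r mulr_gt0 ?divr_gt0 ?ltr0n ?pi_gt0 //=.
  rewrite mulrA ltr_pdivrMr ?ltr0n // mulrC ltr_pM2l ?pi_gt0 // ltr_nat; lia.
rewrite -(horner_Pr_cos _ (lt0r_neq0 c0)) -mulrA pmulr_lgt0 //.
by rewrite mulr_gt0 ?sin_theta_gt0 // exprn_gt0 // mulr_gt0.
Qed.

Lemma mem_iota_half k : k \in iota 1 m./2 -> (0 < k)%N /\ (k.*2 <= m)%N.
Proof.
rewrite mem_iota => /andP [k1 km]; split=> //.
by rewrite -(odd_double_half m) (leq_trans _ (leq_addl _ _)) // leq_double; lia.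
Qed.

Lemma size_prod_linear (s : seq R) :
  (size (\prod_(g <- s) (1 - g%:P * 'X))%R <= (size s).+1)%N.
Proof.
elim: s => [|g s IH]; first by rewrite big_nil size_poly1.
rewrite big_cons /= (leq_trans (size_polyMleq _ _)) //.
have : (size (1 - g%:P * 'X)%R <= 2)%N.
  rewrite (leq_trans (size_polyD _ _)) // size_polyN geq_max size_poly1 /=.
  apply: (leq_trans (size_polyMleq _ _)); rewrite size_polyX.
  by have := size_polyC_leq1 g; lia.
set a := size (1 - g%:P * 'X)%R; set b := size (\prod_(j <- s) (1 - j%:P * 'X))%R.
by move: IH; rewrite -/b; lia.
Qed.

(* Both sides have size at most m/2 + 1 and agree at 0 and at the m/2 distinct points
   (gam k)^-1. *)
Lemma Pr_prod : Pr m = \prod_(k <- iota 1 m./2) (1 - (gam k)%:P * 'X).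
Proof.
set Pi := \prod_(k <- _) _; apply/eqP; rewrite -subr_eq0; apply/negPn/negP => D0.
pose rs := 0 :: [seq (gam k)^-1 | k <- iota 1 m./2].
have sizeD : (size (Pr m - Pi)%R <= (m./2).+1)%N.
  rewrite (leq_trans (size_polyD _ _)) // size_polyN geq_max.
  rewrite size_map_inj_poly ?size_p //=; last exact: intr_inj.
  have := size_prod_linear [seq gam k | k <- iota 1 m./2].
  by rewrite big_map size_map size_iota; apply.
have rootsD : all (root (Pr m - Pi)) rs.
  rewrite /= rootE !hornerE horner_coef0 coef_map /= p_coef0 rmorph1 horner_prod.
  rewrite big1 ?subrr ?eqxx /=; last by move=> k _; rewrite !hornerE subr0.
  apply/allP => _ /mapP [k /mem_iota_half [k0 km] ->].
  rewrite rootE hornerD hornerN Pr_root_gam // sub0r oppr_eq0 horner_prod.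
  rewrite prodf_seq_eq0; apply/hasP; exists k; first by rewrite mem_iota; lia.
  by rewrite !hornerE mulfV ?subrr // lt0r_neq0 // gam_gt0.
have uniq_rs : uniq rs.
  rewrite /= map_inj_in_uniq ?iota_uniq ?andbT.
    apply/mapP => -[k /mem_iota_half [k0 km] /esym/eqP].
    by rewrite invr_eq0 (gt_eqF (gam_gt0 k0 km)).
  move=> i j /mem_iota_half [i0 im] /mem_iota_half [j0 jm] /invr_inj.
  exact: gam_inj.
have := max_poly_roots D0 rootsD uniq_rs.
by rewrite /= size_map size_iota ltnNge sizeD.
Qed.

Lemma Pr_exp_factor s : (2 <= m)%N ->
  exists2 gs, all (fun g => 0 < g <= gam 1) gs &
    Pr m ^+ s.+1 = (1 - (gam 1)%:P * 'X) * \prod_(g <- gs) (1 - g%:P * 'X).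
Proof.
move=> m2; set b := gam 1; set Ga := [seq gam k | k <- iota 1 m./2].
have GaP : all (fun g => 0 < g <= b) Ga.
  apply/allP => _ /mapP [k /mem_iota_half [k0 km] ->].
  by rewrite gam_gt0 ?gam_le1.
have PrE : Pr m = \prod_(g <- Ga) (1 - g%:P * 'X) by rewrite big_map Pr_prod.
elim: s => [|s [gs gsP PrsE]].
  exists (rem b Ga); first by apply/allP => g /mem_rem /(allP GaP).
  rewrite expr1 PrE (big_rem b) //; apply: map_f; rewrite mem_iota; lia.
exists (gs ++ Ga); first by rewrite all_cat gsP GaP.
by rewrite exprS mulrC PrsE big_cat mulrA -PrE.
Qed.

End ChebyshevRoots.

Section Subexponential.
Variable R : realType.
Local Open Scope classical_set_scope.

Definition subexponential (G : nat -> R) :=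
  (forall n, 1 <= G n) /\ (fun n => G n.+1 / G n) @ \oo --> (1 : R).

Section GeomConv.
Variables (G : nat -> R) (c : R).
Hypotheses (G_ge1 : forall n, 1 <= G n) (c_ge0 : 0 <= c) (c_le1 : c <= 1).

Fixpoint geom_conv n := if n is n'.+1 then G n + c * geom_conv n' else G 0.

Local Notation H := geom_conv.

Lemma geom_conv_ge1 n : 1 <= H n.
Proof.
elim: n => [|n IH] /=; first exact: G_ge1.
have := G_ge1 n.+1; have : 0 <= c * H n by rewrite mulr_ge0 // (le_trans _ IH).
lra.
Qed.

Lemma geom_conv_gt0 n : 0 < H n.
Proof. exact: lt_le_trans (geom_conv_ge1 n). Qed.

Lemma geom_conv_lower N k : k.+1%:R * c ^+ k <= H (N + k).
Proof.
elim: k => [|k IH]; first by rewrite addn0 expr0 mulr1 geom_conv_ge1.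
rewrite addnS /= -[k.+2]addn1 natrD exprS.
have := G_ge1 (N + k).+1; have : c ^+ k.+1 <= 1 by rewrite exprn_ile1.
have : c * (k.+1%:R * c ^+ k) <= c * H (N + k) by rewrite ler_wpM2l.
rewrite exprS; nra.
Qed.

Lemma geom_conv_diff e N : 0 <= e ->
  (forall j, (N <= j)%N -> `|G j.+1 - G j| <= e * G j) ->
  forall k, `|H (N + k).+1 - H (N + k)| <=
            c ^+ k * `|H N.+1 - H N| + e * H (N + k).
Proof.
move=> e0 hG; elim=> [|k IH].
  by rewrite addn0 expr0 mul1r lerDl mulr_ge0 // ltW // geom_conv_gt0.
have -> : H (N + k.+1).+1 - H (N + k.+1) =
    (G (N + k).+2 - G (N + k).+1) + c * (H (N + k).+1 - H (N + k)).
  by rewrite addnS /=; ring.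
rewrite (le_trans (ler_normD _ _)) // normrM (ger0_norm c_ge0) addnS /= exprS.
have := hG (N + k).+1 (leq_trans (leq_addr k N) (leqnSn _)).
have : c * `|H (N + k).+1 - H (N + k)| <=
       c * (c ^+ k * `|H N.+1 - H N| + e * H (N + k)) by rewrite ler_wpM2l.
nra.
Qed.

(* With D n := H n.+1 - H n, geom_conv_diff and geom_conv_lower give
   |D (N + k)| / H (N + k) <= |D N| / (k + 1) + e / 2. *)
Lemma geom_conv_ratio :
  (fun n => G n.+1 / G n) @ \oo --> (1 : R) -> (fun n => H n.+1 / H n) @ \oo --> (1 : R).
Proof.
move=> /cvgrPdist_le GR; apply/cvgrPdist_le => e e0.
have e2 : 0 < e / 2 by rewrite divr_gt0.
have [N _ hN] := GR (e / 2) e2.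
have hG j : (N <= j)%N -> `|G j.+1 - G j| <= e / 2 * G j.
  move=> /hN /=; have Gj : 0 < G j by apply: lt_le_trans (G_ge1 j).
  rewrite -[G j.+1 - G j](divfK (lt0r_neq0 Gj)) mulrBl divff ?lt0r_neq0 //.
  by rewrite normrM (gtr0_norm Gj) distrC ler_pM2r.
have [K _ hK] := nbhs_infty_ger (2 * `|H N.+1 - H N| / e).
exists (N + K)%N => // n NKn.
have [k -> Kk] : exists2 k, n = (N + k)%N & (K <= k)%N.
  by exists (n - N)%N; move: NKn => /=; lia.
have Hk := geom_conv_gt0 (N + k).
rewrite -[1](divff (lt0r_neq0 Hk)) -mulrBl normrM normfV (gtr0_norm Hk) distrC.
rewrite ler_pdivrMr //; set DN := `|H N.+1 - H N|.
have DNk : DN <= e / 2 * k.+1%:R.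
  by move: (hK k Kk); rewrite -/DN ler_pdivrMr // -[k.+1]addn1 natrD; nra.
have := ler_wpM2l (exprn_ge0 k c_ge0) DNk.
have := geom_conv_lower N k; have := geom_conv_diff (ltW e2) hG k.
rewrite -/DN; nra.
Qed.

End GeomConv.

Lemma subexponential_geom_conv G c : 0 <= c <= 1 ->
  subexponential G -> subexponential (geom_conv G c).
Proof.
move=> /andP [c0 c1] [G1 GR].
by split; [apply: geom_conv_ge1 | apply: geom_conv_ratio].
Qed.

Lemma subexponential_ratio_shift G : subexponential G ->
  forall i, (fun n => G n / G (n + i)%N) @ \oo --> (1 : R).
Proof.
move=> [G1 GR]; have G_neq0 n : G n != 0 by rewrite lt0r_neq0 // (lt_le_trans _ (G1 n)).
have GRV : (fun n => G n / G n.+1) @ \oo --> (1 : R).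
  rewrite -(eq_cvg _ _ (fun n => invf_div (G n.+1) (G n))).
  by have := cvgV (oner_neq0 R) GR; rewrite invr1; apply.
elim=> [|i IH].
  by under eq_cvg do rewrite addn0 divff //; apply: cvg_cst.
have GRVi : (fun n => G (n + i)%N / G (n + i).+1) @ \oo --> (1 : R).
  by rewrite (cvg_shiftn i (fun n => G n / G n.+1)).
have E : (fun n => G n / G (n + i)%N * (G (n + i)%N / G (n + i).+1)) =1
    (fun n => G n / G (n + i.+1)%N).
  by move=> n; rewrite addnS mulrA divfK.
by rewrite -(eq_cvg _ _ E); have := cvgM IH GRVi; rewrite mulr1; apply.
Qed.

(* For n >= size Q, conv Q (b ^+ k * G k) n = b ^+ n * G n * u n with
   u n := \sum_(i < size Q) Q`_i * b^-1 ^+ i * G (n - i) / G n, and u tends to Q.[b^-1]. *)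
Lemma conv_subexponential_gt0 G (b : R) (Q : {poly R}) :
  subexponential G -> 0 < b -> 0 < Q.[b^-1] ->
  exists N, forall n, (N <= n)%N -> 0 < conv Q (fun k => b ^+ k * G k) n.
Proof.
move=> GS b0 Qb; have G_gt0 n : 0 < G n by apply: lt_le_trans (GS.1 n).
set L := size Q.
pose u i k := Q`_i * b^-1 ^+ i * (G (k + (L - i))%N / G (k + (L - i) + i)%N).
have cu : (fun k => \sum_(i < L) u i k) @ \oo --> Q.[b^-1].
  rewrite horner_coef; apply: (cvg_big add_continuous) => i _.
  have := subexponential_ratio_shift GS i; rewrite -(cvg_shiftn (L - i)) => GRi.
  by have := cvgM (cvg_cst (Q`_i * b^-1 ^+ i)) GRi; rewrite mulr1; apply.
have [N _ hN] := cvgr_gt _ cu _ Qb.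
exists (N + L)%N => n NLn.
have [k -> Nk] : exists2 k, n = (k + L)%N & (N <= k)%N by exists (n - L)%N; lia.
have -> : conv Q (fun k => b ^+ k * G k) (k + L) =
    b ^+ (k + L) * G (k + L)%N * \sum_(i < L) u i k.
  rewrite /conv mulr_sumr (big_ord_widen (k + L).+1 (fun i => _ * u i k)); last lia.
  rewrite [RHS]big_mkcond; apply: eq_bigr => i _; case: ifP => iL; last first.
    by rewrite nth_default ?mul0r // leqNgt iL.
  rewrite /u; have -> : (k + (L - i) + i = k + L)%N by lia.
  have -> : (k + (L - i) = k + L - i)%N by lia.
  rewrite exprVn exprB ?unitfE ?lt0r_neq0 //; last lia.
  by field; rewrite !lt0r_neq0 ?exprn_gt0.
by rewrite !mulr_gt0 ?exprn_gt0 //; apply: hN.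
Qed.

Lemma conv_linear_geom_conv G (b g : R) : b != 0 ->
  conv (1 - g%:P * 'X) (fun k => b ^+ k * geom_conv G (g / b) k) =1
  (fun k => b ^+ k * G k).
Proof.
move=> b0 [|k]; first by rewrite conv_linear0.
by rewrite conv_linearS /= exprS; field.
Qed.

Lemma prod_linear_inverse (b : R) (gs : seq R) : 0 < b ->
  all (fun g => 0 < g <= b) gs ->
  exists2 G, subexponential G &
    conv ((1 - b%:P * 'X) * \prod_(g <- gs) (1 - g%:P * 'X)) (fun k => b ^+ k * G k)
    =1 delta.
Proof.
move=> b0; elim: gs => [_|g gs IH /= /andP [/andP [g0 gb] /IH [G GS convG]]].
  exists (fun=> 1).
    split=> //; rewrite (_ : (fun n => 1 / 1) = fun=> 1); last by rewrite divr1.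
    exact: cvg_cst.
  rewrite big_nil mulr1 => -[|n]; first by rewrite conv_linear0 mulr1.
  by rewrite conv_linearS !mulr1 exprS subrr.
exists (geom_conv G (g / b)).
  apply: subexponential_geom_conv => //; apply/andP; split.
    exact: divr_ge0 (ltW g0) (ltW b0).
  by rewrite ler_pdivrMr ?mul1r.
move=> n; rewrite big_cons mulrCA mulrC conv_mul -(convG n) mulrC.
by apply: eq_conv; apply: conv_linear_geom_conv; rewrite lt0r_neq0.
Qed.

End Subexponential.

Lemma F_coef_m1 (xi : seq nat) (mu : nat) : all (fun k => (0 < k <= 1)%N) xi ->
  forall r, F_coef xi 1 mu r = (r == 0%N)%:R.
Proof.
move=> xi1 r; rewrite -coef1; apply: fps_div_coef_mul; first exact/coef0_exp/p_coef0.
rewrite modn1 /= expr1n !mul1r /Defs.p_part big_seq big1 // => k /(allP xi1).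
by case: k => [|[|]].
Qed.

Lemma F_coef_eventually0 (xi : seq nat) (m mu : nat) : (mu %/ m < count_mem m xi)%N ->
  exists N, forall r, (N <= r)%N -> F_coef xi m mu r = 0.
Proof.
move=> tmu.
set Q := p (m - mu %% m - 1) * p m ^+ (count_mem m xi - (mu %/ m).+1) *
  Defs.p_part [seq k <- xi | k != m].
exists (size Q) => r Qr; rewrite /F_coef (fps_div_coef_mul _ (Q := Q)).
- by rewrite nth_default.
- exact/coef0_exp/p_coef0.
by rewrite (p_part_count xi m) -(subnKC tmu) exprD /Q; ring.
Qed.

Lemma F_coef_eventually_gt0 (R : realType) (xi : seq nat) (m mu : nat) :
  (2 <= m)%N -> all (fun k => (0 < k <= m)%N) xi -> (count_mem m xi <= mu %/ m)%N ->
  exists N, forall r, (N <= r)%N -> 0 < F_coef xi m mu r.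
Proof.
move=> m2 xim tmu; set t := count_mem m xi; set s := (mu %/ m - t)%N.
set xi' := [seq k <- xi | k != m]; set b := gam R m 1.
set Q := Pr R (m - mu %% m - 1) * \prod_(k <- xi') Pr R k.
have b0 : 0 < b by apply: gam_gt0; lia.
have [gs gsP PrE] := Pr_exp_factor R s m2.
have [G GS convG] := prod_linear_inverse b0 gsP; rewrite -PrE in convG.
have FE r : (F_coef xi m mu r)%:~R = conv Q (fun k => b ^+ k * G k) r.
  apply: fps_div_coef_map => [|n]; first exact/coef0_exp/p_coef0.
  rewrite rmorphXn /= -/(Pr R m) (_ : (mu %/ m).+1 = t + s.+1)%N; last lia.
  have QE : conv (Pr R m ^+ s.+1) (conv Q (fun k => b ^+ k * G k)) =1 (fun k => Q`_k).
    by move=> k; apply: conv_inverse.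
  rewrite exprD conv_mul (eq_conv _ QE) conv_coef (p_part_count xi m).
  by rewrite !rmorphM rmorphXn rmorph_prod /Q /Pr mulrCA mulrA.
have Qb : 0 < Q.[b^-1].
  rewrite hornerM horner_prod mulr_gt0 ?Pr_gt0 //; first lia.
  rewrite big_seq prodr_gt0 // => k; rewrite mem_filter => /andP [km /(allP xim)].
  by move=> /andP [_ kle]; rewrite Pr_gt0 // ltn_neqAle km.
have [N hN] := conv_subexponential_gt0 GS b0 Qb.
by exists N => r /hN; rewrite -FE ltr0z.
Qed.

Theorem theorem1p1 (m : nat) (xi : seq nat) (mu : nat) :
  (1 <= m)%N ->
  sorted geq xi ->
  all (fun k => (0 < k <= m)%N) xi ->
  (m = 1%N -> forall r : nat, F_coef xi m mu r = (r == 0%N)%:R) /\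
  ((2 <= m)%N ->
     ((mu %/ m < count_mem m xi)%N ->
        exists N : nat, forall r : nat, (N <= r)%N -> F_coef xi m mu r = 0) /\
     ((count_mem m xi <= mu %/ m)%N ->
        exists N : nat, forall r : nat, (N <= r)%N -> 0 < F_coef xi m mu r)).
Proof.
move=> _ _ xim; split; first by move=> m1; subst m; apply: F_coef_m1.
move=> m2; split; first exact: F_coef_eventually0.
exact: (F_coef_eventually_gt0 Rdefinitions.R).
Qed.
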